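(* Let $(A,B)$ be a Katsura pair, with associated action $\phi_{A,B}:\mathbb{Z}\times E_A^0\to\operatorname{PIso}(E_A^* )$. Then $a_i^k\in\ker(\phi_{A,B})$ if and only if $\frac{kB_\mu}{A_\mu}\in\mathbb{Z}$ for all $\mu\in iE_A^*$.
   Context: Katsura pair: $N\in\mathbb{N}$, $A\in M_N(\mathbb{N})$ (nonnegative integers), $B\in M_N(\mathbb{Z})$ with $A_{ij}=0\Rightarrow B_{ij}=0$. Graph $E_A$: vertices $\{1,\dots,N\}$, edges $e_{i,j,m}$ ($0\le m<A_{ij}$), $r(e_{i,j,m})=i$, $s(e_{i,j,m})=j$. Finite paths $\mu_1\cdots\mu_n$ with $s(\mu_t)=r(\mu_{t+1})$ (vertices are paths of length 0); $iE_A^*$ are the finite paths with range $i$. For $\mu=e_{i_0,i_1,r_1}\cdots e_{i_{n-1},i_n,r_n}$, $A_\mu=\prod_{t=0}^{n-1}A_{i_ti_{t+1}}$ and $B_\mu=\prod_{t=0}^{n-1}B_{i_ti_{t+1}}$ (empty product $=1$). The group bundle $\mathbb{Z}\times E_A^0$ has elements $a_i^k$ ($k\in\mathbb{Z}$, $i$ a vertex) with $a_i^ka_i^l=a_i^{k+l}$. It acts by $a_i^k\cdot e_{i,j,m}=e_{i,j,\hat m}$, $a_i^k|_{e_{i,j,m}}=a_j^{\hat k}$ where $kB_{ij}+m=\hat kA_{ij}+\hat m$, $0\le\hat m<A_{ij}$, extended to paths by $g\cdot(e\nu)=(g\cdot e)(g|_e\cdot\nu)$; $\phi_{A,B}(a_i^k)$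 is the resulting bijection of $iE_A^*$. $\ker(\phi_{A,B})$ is the set of $a_i^k$ acting as the identity on $iE_A^*$. *)

From HB Require Import structures.
From mathcomp Require Import all_boot all_order all_algebra.
Set Implicit Arguments. Unset Strict Implicit. Unset Printing Implicit Defensive.
Import Order.TTheory GRing.Theory Num.Theory.
Local Open Scope ring_scope.

Definition katsura_pair (N : nat) (A : 'M[nat]_N) (B : 'M[int]_N) : Prop :=
  forall i j : 'I_N, A i j = 0%N -> B i j = 0.

(* An edge e_{i,j,m} is encoded as the triple (i, j, m), with range i,
   source j, and it is an edge of E_A iff m < A i j. *)
Definition edge (N : nat) : Type := ('I_N * 'I_N * nat)%type.

(* [is_path_from A i p]: the sequence of edges p = mu_1 ... mu_n is a finite
   path of E_A with range i (p = [::] is the vertex i, a path of length 0). *)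
Fixpoint is_path_from (N : nat) (A : 'M[nat]_N) (i : 'I_N) (p : seq (edge N))
  : bool :=
  match p with
  | [::] => true
  | (r, s, m) :: q => [&& r == i, (m < A r s)%N & is_path_from A s q]
  end.

Definition A_path (N : nat) (A : 'M[nat]_N) (p : seq (edge N)) : int :=
  \prod_(e <- p) (A e.1.1 e.1.2)%:Z.
Definition B_path (N : nat) (B : 'M[int]_N) (p : seq (edge N)) : int :=
  \prod_(e <- p) B e.1.1 e.1.2.

(* Action of a_r^k on a path with range r: on the first edge e_{r,s,m},
   k B_rs + m = khat A_rs + mhat with 0 <= mhat < A_rs (Euclidean division,
   A_rs > 0 since the edge exists); the restriction a_s^khat acts on the rest. *)
Fixpoint katsura_act (N : nat) (A : 'M[nat]_N) (B : 'M[int]_N) (k : int)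
  (p : seq (edge N)) : seq (edge N) :=
  match p with
  | [::] => [::]
  | (r, s, m) :: q =>
      let t := k * B r s + m%:Z in
      (r, s, `|(t %% (A r s)%:Z)%Z|%N) :: katsura_act A B (t %/ (A r s)%:Z)%Z q
  end.

Definition in_ker_phi (N : nat) (A : 'M[nat]_N) (B : 'M[int]_N)
  (i : 'I_N) (k : int) : Prop :=
  forall p : seq (edge N), is_path_from A i p -> katsura_act A B k p = p.

(** The generator a_i^k fixes the first edge e_{i,j,m} of a path exactly when
    A_ij divides k B_ij (the remainder of k B_ij + m by A_ij is then m), and
    then its restriction is a_j^c with c = k B_ij / A_ij.  Since
    A_{e mu} = A_ij A_mu and k B_{e mu} = A_ij (c B_mu), the condition
    A_{e mu} | k B_{e mu} unfolds along edges in exactly the same way, and an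
    induction on paths identifies the two conditions. *)

From HB Require Import structures.
From mathcomp Require Import all_boot all_order all_algebra.
From mathcomp Require Import ring.
Set Implicit Arguments. Unset Strict Implicit. Unset Printing Implicit Defensive.
Import Order.TTheory GRing.Theory Num.Theory.
Local Open Scope ring_scope.

Lemma dvdz_ratP (d m : int) : d != 0 ->
  (exists z : int, (m%:~R / d%:~R : rat) = z%:~R) <-> (d %| m)%Z.
Proof.
move=> d0; have d0' : (d%:~R : rat) != 0 by rewrite intr_eq0.
split=> [[z mdz]|dm].
- by apply/dvdzP; exists z; apply: (@intr_inj rat); rewrite intrM -mdz mulfVK.
- by exists (m %/ d)%Z; rewrite -{1}(divzK dm) intrM mulfK.
Qed.

Lemma absz_modzDn_eq (x : int) (d r : nat) : (r < d)%N ->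
  (`|((x + r%:Z) %% d%:Z)%Z|%N == r) = (d%:Z %| x)%Z.
Proof.
move=> r_lt_d; have d0 : d%:Z != 0 by case: d r_lt_d.
have modz_r : (r%:Z %% d%:Z)%Z = r%:Z by rewrite modz_small.
by rewrite -eqz_nat gez0_abs ?modz_ge0 // -[X in _ == X]modz_r eqz_mod_dvd addrK.
Qed.

Lemma divzDn_dvd (x : int) (d r : nat) : (r < d)%N -> (d%:Z %| x)%Z ->
  ((x + r%:Z) %/ d%:Z)%Z = (x %/ d%:Z)%Z.
Proof.
move=> r_lt_d /dvdzP [q ->]; have d0 : d%:Z != 0 by case: d r_lt_d.
by rewrite divzMDl // mulzK // divz_small ?addr0.
Qed.

Section KatsuraPaths.

Variables (N : nat) (A : 'M[nat]_N) (B : 'M[int]_N).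

Lemma A_path_cons (e : edge N) p : A_path A (e :: p) = (A e.1.1 e.1.2)%:Z * A_path A p.
Proof. by rewrite /A_path big_cons. Qed.

Lemma B_path_cons (e : edge N) p : B_path B (e :: p) = B e.1.1 e.1.2 * B_path B p.
Proof. by rewrite /B_path big_cons. Qed.

Lemma A_path_gt0 i p : is_path_from A i p -> 0 < A_path A p.
Proof.
elim: p i => [|[[r s] m] q IH] i /=; first by rewrite /A_path big_nil.
case/and3P=> _ m_lt hq; rewrite A_path_cons mulr_gt0 ?(IH s) //.
by rewrite ltz_nat (leq_ltn_trans _ m_lt).
Qed.

Section Edge.

Variables (i s : 'I_N) (m : nat) (k : int).
Hypothesis m_lt : (m < A i s)%N.

Let A_gt0 : (0 < A i s)%N. Proof. exact: leq_ltn_trans m_lt. Qed.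

Lemma katsura_act_fixes_head q :
  (head (i, s, m) (katsura_act A B k ((i, s, m) :: q)) == (i, s, m))
  = ((A i s)%:Z %| k * B i s)%Z.
Proof. by rewrite /= !xpair_eqE !eqxx absz_modzDn_eq. Qed.

Hypothesis dvd_edge : ((A i s)%:Z %| k * B i s)%Z.

Lemma katsura_act_cons q :
  katsura_act A B k ((i, s, m) :: q)
  = (i, s, m) :: katsura_act A B ((k * B i s) %/ (A i s)%:Z)%Z q.
Proof.
have := katsura_act_fixes_head q; rewrite dvd_edge /= => /eqP [->].
by rewrite (divzDn_dvd m_lt dvd_edge).
Qed.

Lemma dvdz_path_cons q :
  (A_path A ((i, s, m) :: q) %| k * B_path B ((i, s, m) :: q))%Z
  = (A_path A q %| ((k * B i s) %/ (A i s)%:Z)%Z * B_path B q)%Z.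
Proof.
set c := ((k * B i s) %/ (A i s)%:Z)%Z.
have A0 : (A i s)%:Z != 0 by rewrite lt0n_neq0.
have -> : k * B_path B ((i, s, m) :: q) = (A i s)%:Z * (c * B_path B q).
  by rewrite B_path_cons mulrA -(divzK dvd_edge) -/c /=; ring.
by rewrite A_path_cons dvdz_mul2l.
Qed.

End Edge.

Lemma in_ker_phi_edge i s m k : (m < A i s)%N -> in_ker_phi A B i k ->
  ((A i s)%:Z %| k * B i s)%Z /\ in_ker_phi A B s ((k * B i s) %/ (A i s)%:Z)%Z.
Proof.
move=> m_lt ker_k.
have fix_path q : is_path_from A s q -> katsura_act A B k ((i, s, m) :: q) = (i, s, m) :: q.
  by move=> hq; apply: ker_k; rewrite /= eqxx m_lt.
have dvd_edge : ((A i s)%:Z %| k * B i s)%Z.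
  by rewrite -(katsura_act_fixes_head _ m_lt [::]) fix_path.
split=> // q hq; have := fix_path q hq.
by rewrite katsura_act_cons // => -[].
Qed.

Lemma in_ker_phi_dvdP i k : in_ker_phi A B i k <->
  (forall p, is_path_from A i p -> (A_path A p %| k * B_path B p)%Z).
Proof.
split.
- move=> ker_k p; elim: p i k ker_k => [|[[r s] m] q IH] i k ker_k /=.
    by rewrite /A_path big_nil dvd1z.
  case/and3P=> /eqP-> m_lt hq; have [dvd_edge ker_c] := in_ker_phi_edge m_lt ker_k.
  by rewrite dvdz_path_cons //; exact: IH ker_c hq.
- move=> dvd_k p; elim: p i k dvd_k => [|[[r s] m] q IH] i k dvd_k //.
  case/and3P=> /eqP-> m_lt hq.
  have dvd_edge : ((A i s)%:Z %| k * B i s)%Z.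
    by have := dvd_k [:: (i, s, m)]; rewrite /= eqxx m_lt /A_path /B_path !big_seq1; apply.
  rewrite katsura_act_cons // (IH s) // => p hp.
  by rewrite -(dvdz_path_cons m_lt) // dvd_k //= eqxx m_lt.
Qed.

End KatsuraPaths.

Theorem proposition3p1 (N : nat) (A : 'M[nat]_N) (B : 'M[int]_N)
  (hAB : katsura_pair A B) (i : 'I_N) (k : int) :
  in_ker_phi A B i k <->
  (forall p : seq (edge N), is_path_from A i p ->
     exists z : int,
       ((k * B_path B p)%:~R / (A_path A p)%:~R : rat) = z%:~R).
Proof.
rewrite in_ker_phi_dvdP; split=> dvd_k p hp;
  have ratP := dvdz_ratP (k * B_path B p) (lt0r_neq0 (A_path_gt0 hp));
  by apply/ratP; apply: dvd_k.
Qed.
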